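(* Let $D\ge3$ and let $\mathcal G$ be a connected closed $(D+1)$-colored graph with colors $0,1,\dots,D$ and $2p$ vertices. Let $\mathcal B_{(1)},\dots,\mathcal B_{(|\rho|)}$ be the connected components of the subgraph of $\mathcal G$ formed by all vertices and all lines of colors $1,\dots,D$ (each is a connected closed $D$-colored graph), and for $i=1,\dots,D$ let $|\mathcal F_{0i}|$ be the number of faces of $\mathcal G$ of colors $\{0,i\}$. Then $$(D-1)|\rho| - \frac{2}{(D-2)!}\sum_{\rho}\omega(\mathcal B_{(\rho)}) - (D-1)p + \sum_{i=1}^D|\mathcal F_{0i}| \;=\; D - \frac{2}{(D-1)!}\,\omega(\mathcal G).$$ Consequently, in the tensor model with action $S(T,\bar T)=t_1\mathrm{Tr}_{\mathcal B_1}(T,\bar T)+\sum_{\mathcal B}t_{\mathcal B}N^{-\frac{2}{(D-2)!}\omega(\mathcal B)}\mathrm{Tr}_{\mathcal B}(T,\bar T)$ and weight $e^{-N^{D-1}S}$, the Feynman amplitude of $\mathcal G$ equals $\frac{\prod_\rho t_{\mathcal B_{(\rho)}}}{t_1^{p}}\,N^{D-\frac{2}{(D-1)!}\omega(\mathcal G)}$.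
   Context: A closed $n$-colored graph is a finite graph (multiple lines allowed) whose vertex set is partitioned into white and black vertices of equal number, every line joining a white to a black vertex, whose lines are each assigned one of $n$ colors, and such that every vertex has degree $n$ with the $n$ lines incident to it having pairwise distinct colors. A face of colors $\{i,j\}$ is a connected component of the subgraph formed by all vertices and all lines of colors $i,j$. For a cyclic permutation $\tau$ of the color set, the jacket $\mathcal J_\tau$ is the ribbon graph with all vertices and lines of the graph whose faces are the faces of colors $\{\tau^q(c),\tau^{q+1}(c)\}$ for all $q$; $\tau$ and $\tau^{-1}$ give the same jacket; its genus $g$ is defined by $V-E+F=2-2g$. The degree $\omega$ of a graph is the sum of genera of all its distinct jackets. For a $D$-colored graph $\mathcal B$, $\mathrm{Tr}_{\mathcal B}(T,\bar T)=\sum\prod_{i=1}^D\prod_{\text{lines } (v,\bar v)\text{ of color } i}\delta_{n^v_i\bar n^{\bar v}_i}\prod_{v}T_{\vec n^v}\prod_{\bar v}\bar T_{\bar{\vec n}^{\bar v}}$, with one complex rank-$D$ tensor $T$ (indices in $\{1,\dots,N\}$) per white vertex and one $\bar T$ per black vertex; $\mathcal B_1$ is the unique $D$-colored graph with two vertices. In the Feynman expansion each Wick contraction (a color-$0$ line) contributes $\frac{1}{t_1N^{D-1}}\prod_i\delta_{n_i\bar n_i}$ and each bubble $\mathcal B_{(\rho)}$ contributes $t_{\mathcal B_{(\rho)}}N^{D-1-\frac{2}{(D-2)!}\omega(\mathcal B_{(\rho)})}$ times its index contractions; each face of colors $\{0,i\}$ gives a free index sum, i.e. a factor $N$. *)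

From HB Require Import structures.
From mathcomp Require Import all_boot all_order all_algebra all_fingroup.
Set Implicit Arguments. Unset Strict Implicit. Unset Printing Implicit Defensive.
Import Order.TTheory GRing.Theory Num.Theory.

(* A closed colored graph with 2p vertices and colors in a finite type Col:
   white vertices are inl w, black vertices are inr b (w, b : 'I_p);
   sg c w = b  iff the line of color c at the white vertex w ends at the
   black vertex b.  This encodes exactly: bipartite, every vertex of degree
   #|Col| with pairwise distinct colors on its lines, multiple lines allowed. *)
Definition vtx (p : nat) := ('I_p + 'I_p)%type.

Section ColoredGraph.
Variables (Col : finType) (p : nat) (sg : Col -> {perm 'I_p}).

Definition edge (S : {set Col}) : rel (vtx p) := fun x y =>
  match x, y with
  | inl w, inr b => [exists c in S, sg c w == b]
  | inr b, inl w => [exists c in S, sg c w == b]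
  | _, _ => false
  end.

(* number of connected components, inside the (S-closed) vertex set C,
   of the subgraph with line colors in S; for S = {i,j} these are the
   faces of colors {i,j} *)
Definition nfaces (S : {set Col}) (C : {set vtx p}) : nat :=
  n_comp (edge S) (mem C).

Definition nvert (C : {set vtx p}) : nat := #|C|.
Definition nlines (C : {set vtx p}) : nat :=
  #|[set wc : 'I_p * Col | inl wc.1 \in C]|.

Definition cyclic_perm (tau : {perm Col}) : bool :=
  [forall c, porbit tau c == [set: Col]].

(* the jacket J_tau, identified with the set of color pairs of its faces
   {tau^q(c), tau^(q+1)(c)}; J_tau = J_(tau^-1) automatically *)
Definition jacket_of (tau : {perm Col}) : {set {set Col}} :=
  [set [set c; tau c] | c : Col].

Definition jackets : {set {set {set Col}}} :=
  [set jacket_of tau | tau in [set tau : {perm Col} | cyclic_perm tau]].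

(* genus of a jacket J of the graph with vertex set C: V - E + F = 2 - 2g *)
Definition jacket_genus (J : {set {set Col}}) (C : {set vtx p}) : rat :=
  (2 - (nvert C)%:R + (nlines C)%:R - (\sum_(P in J) nfaces P C)%:R) / 2.

Definition degree (C : {set vtx p}) : rat :=
  \sum_(J in jackets) jacket_genus J C.

Definition connected_graph : Prop :=
  forall x y : vtx p, connect (edge [set: Col]) x y.

End ColoredGraph.

Definition colors1D (D : nat) : {set 'I_D.+1} := [set c | c != ord0].

Definition bubbles (D p : nat) (sg : 'I_D.+1 -> {perm 'I_p}) : {set {set vtx p}} :=
  [set [set y | connect (edge sg (colors1D D)) x y] | x : vtx p].

(* the D-colored graph of a bubble: colors 1..D, i.e. lift ord0 i for i : 'I_D *)
Definition bubble_colors (D p : nat) (sg : 'I_D.+1 -> {perm 'I_p}) : 'I_D -> {perm 'I_p} :=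
  fun i => sg (lift ord0 i).

From mathcomp Require Import all_boot all_order all_algebra all_fingroup.
From mathcomp Require Import ring lra.
Import GRing.Theory Num.Theory.
Set Implicit Arguments. Unset Strict Implicit. Unset Printing Implicit Defensive.

(* For a graph with k >= 3 colours, the jackets are the cyclic orders of the
   colours up to reversal; there are (k-1)!/2 of them, and each pair of colours
   is adjacent in exactly (k-2)! of them.  Summing Euler's relation over the
   jackets therefore gives
     omega = (k-1)!/4 (2 - V + E) - (k-2)!/2 sum_{i<j} F_ij.
   Apply this to G (k = D+1) and to every bubble (k = D): the bubbles partition
   the vertices and the lines of colours 1..D, and the faces of G with both
   colours in 1..D are exactly the faces of the bubbles.  What remains is the
   identity between two affine expressions in p, |rho| and the face counts. *)

Section CyclicPerm.
Variable T : finType.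
Implicit Types (t s : {perm T}) (x y c d : T).

Definition cyclic_perms : {set {perm T}} := [set t | cyclic_perm t].

Lemma cyclic_permP t : reflect (forall x y, y \in porbit t x) (cyclic_perm t).
Proof.
apply: (iffP forallP) => [H x y | H x]; first by rewrite (eqP (H x)) inE.
by apply/eqP/setP => y; rewrite inE H.
Qed.

Lemma cyclic_perm_card_le t x (S : {set T}) :
  cyclic_perm t -> porbit t x \subset S -> #|T| <= #|S|.
Proof.
move=> /cyclic_permP H sub; rewrite -cardsT subset_leq_card //.
by apply: subset_trans sub; apply/subsetP => y _; apply: H.
Qed.

Lemma cyclic_perm_neq t x : 1 < #|T| -> cyclic_perm t -> t x != x.
Proof.
move=> hn H; apply/eqP => tx.
have : #|T| <= #|[set x]|.
  apply: (@cyclic_perm_card_le t x _ H); apply/subsetP => y /porbitP [i ->].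
  by rewrite permX_fix // inE.
by rewrite cards1 leqNgt hn.
Qed.

Lemma cyclic_perm_neq2 t x : 2 < #|T| -> cyclic_perm t -> t (t x) != x.
Proof.
move=> hn H; apply/eqP => ttx.
have : #|T| <= #|[set x; t x]|.
  apply: (@cyclic_perm_card_le t x _ H); apply/subsetP => y /porbitP [i ->].
  rewrite permX; elim: i => [|i IH] /=; first by rewrite !inE eqxx.
  by move: IH; rewrite !inE => /orP [] /eqP ->; rewrite ?ttx eqxx ?orbT.
by rewrite cards2 leqNgt (leq_ltn_trans _ hn) //; case: (_ != _).
Qed.

Lemma cyclic_permV t : cyclic_perm t -> cyclic_perm t^-1%g.
Proof. by move=> /cyclic_permP H; apply/cyclic_permP => x y; rewrite porbitV. Qed.

Lemma cyclic_permJ t s : cyclic_perm t -> cyclic_perm (t ^ s)%g.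
Proof.
move=> /cyclic_permP H; apply/cyclic_permP => x y; apply/porbitP.
have /porbitP [i E] := H (s^-1 x)%g (s^-1 y)%g; exists i.
by rewrite -conjXg -(permKV s x) permJ -E permKV.
Qed.

Lemma cyclic_perm_exists : exists t, cyclic_perm t.
Proof.
have inj : injective (next (enum T)) by apply: can_inj (prev_next (enum_uniq T)).
exists (perm inj); apply/cyclic_permP => x y; apply/porbitP.
have C : fconnect (next (enum T)) x y.
  by apply: (connect_cycle (cycle_next (enum_uniq T))); rewrite mem_enum.
exists (findex (next (enum T)) x y); rewrite permX -{1}(iter_findex C).
by apply: eq_iter => z; rewrite permE.
Qed.

Lemma card_porbit_cyclic t x : cyclic_perm t -> #|porbit t x| = #|T|.
Proof. by move=> /cyclic_permP H; rewrite -cardsT; apply: eq_card => y; rewrite inE H. Qed.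

(* Every cyclic permutation is a conjugate [t0 ^ s] of a fixed one, by a unique
   [s] fixing a given point [a]: [s] maps the [t0]-orbit of [a] onto the
   [t]-orbit of [a], term by term. *)
Lemma cyclic_perm_conj_inj t0 a (s1 s2 : {perm T}) :
  cyclic_perm t0 -> perm_on (~: [set a]) s1 -> perm_on (~: [set a]) s2 ->
  (t0 ^ s1)%g = (t0 ^ s2)%g -> s1 = s2.
Proof.
move=> /cyclic_permP H h1 h2 E.
have fix_a s : perm_on (~: [set a]) s -> s a = a.
  by move=> hs; apply: out_perm hs _; rewrite !inE negbK.
have iterE k : s1 (iter k t0 a) = s2 (iter k t0 a).
  elim: k => [|k IH] /=; first by rewrite (fix_a _ h1) (fix_a _ h2).
  by rewrite -(permJ t0 s1) -(permJ t0 s2) E IH.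
by apply/permP => x; have /porbitP [i ->] := H a x; rewrite permX iterE.
Qed.

Lemma cyclic_perm_conj_surj t0 t a :
  cyclic_perm t0 -> cyclic_perm t ->
  exists2 s : {perm T}, perm_on (~: [set a]) s & t = (t0 ^ s)%g.
Proof.
move=> H0 H.
have n0 : 0 < #|T| by apply/card_gt0P; exists a.
set s0 := traject t0 a #|T|.
have u0 : uniq s0 by rewrite /s0 -(card_porbit_cyclic a H0) uniq_traject_porbit.
have m0 x : x \in s0.
  by rewrite /s0 -(card_porbit_cyclic a H0) -porbit_traject; apply/cyclic_permP.
have u1 : uniq (traject t a #|T|).
  by rewrite -(card_porbit_cyclic a H) uniq_traject_porbit.
have ilt x : index x s0 < #|T| by rewrite -[#|T|](size_traject t0 a) index_mem.
have x0E x : x = iter (index x s0) t0 a by rewrite -(nth_traject t0 (ilt x)) nth_index.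
pose sf x := iter (index x s0) t a.
have sinj : injective sf.
  move=> x y; rewrite /sf -!(nth_traject t (ilt _)) => /eqP.
  rewrite nth_uniq ?size_traject // => /eqP E.
  by rewrite -(nth_index a (m0 x)) E nth_index.
pose s := perm sinj.
have ia : index a s0 = 0 by rewrite /s0 -(prednK n0) /= eqxx.
have sa : s a = a by rewrite permE /sf ia.
exists s; first by apply/subsetP => x; rewrite !inE; apply: contra => /eqP ->; rewrite sa.
apply/permP => y; rewrite -(permKV s y) permJ; set x := (s^-1 y)%g.
rewrite !permE /sf.
have [lt_xT|] := ltnP (index x s0).+1 #|T|.
  suff -> : index (t0 x) s0 = (index x s0).+1 by [].
  by rewrite {1}(x0E x) -iterS -(nth_traject t0 lt_xT) index_uniq // size_traject.
move=> ge_xT; have last_x : (index x s0).+1 = #|T| by apply/eqP; rewrite eqn_leq ilt.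
have -> : t0 x = a by rewrite {1}(x0E x) -iterS last_x -(card_porbit_cyclic a H0) iter_porbit.
by rewrite ia -iterS last_x -(card_porbit_cyclic a H) iter_porbit.
Qed.

Lemma card_cyclic_perms : 0 < #|T| -> #|cyclic_perms| = #|T|.-1`!.
Proof.
move=> /card_gt0P [a _]; have [t0 H0] := cyclic_perm_exists.
have -> : cyclic_perms = [set (t0 ^ s)%g | s in perm_on (~: [set a])].
  apply/setP => t; rewrite inE; apply/idP/imsetP => [H | [s _ ->]].
    by have [s hs ->] := cyclic_perm_conj_surj a H0 H; exists s.
  exact: cyclic_permJ.
rewrite card_in_imset; last by move=> s1 s2; apply: cyclic_perm_conj_inj.
by rewrite card_perm cardsC1.
Qed.

Definition cyclic_perms_at c d : {set {perm T}} := [set t in cyclic_perms | t c == d].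

Lemma card_cyclic_perms_at_le c d c' d' : c != d -> c' != d' ->
  #|cyclic_perms_at c d| <= #|cyclic_perms_at c' d'|.
Proof.
move=> cd cd'; pose t1 := tperm c c'; pose s := (t1 * tperm (t1 d) d')%g.
have sc : s c = c'.
  rewrite permM /t1 tpermL tpermD // ?(eq_sym d') //.
  by rewrite -{2}(tpermL c c') (inj_eq perm_inj) eq_sym.
have sd : s d = d' by rewrite permM tpermL.
rewrite -(card_in_imset (f := fun t => (t ^ s)%g)); last by move=> t t' _ _ /conjg_inj.
apply/subset_leq_card/subsetP => y /imsetP [t]; rewrite !inE => /andP [Ht /eqP tc] ->.
by rewrite cyclic_permJ //= -sc permJ tc sd eqxx.
Qed.

Lemma card_cyclic_perms_at c d : c != d -> #|cyclic_perms_at c d| = #|T|.-2`!.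
Proof.
move=> cd.
have eq_at d' : d' != c -> #|cyclic_perms_at c d'| = #|cyclic_perms_at c d|.
  by move=> d'c; apply/eqP; rewrite eqn_leq !card_cyclic_perms_at_le // eq_sym.
have n1 : 1 < #|T| by rewrite (leq_trans _ (max_card [set c; d])) // cards2 cd.
have : #|cyclic_perms| = \sum_(d' | d' != c) #|cyclic_perms_at c d'|.
  rewrite -sum1_card (partition_big (fun t : {perm T} => t c) (fun d' => d' != c)) /=.
    by apply: eq_bigr => d' _; rewrite -sum1_card; apply: eq_bigl => t; rewrite !inE.
  by move=> t; rewrite inE => /(cyclic_perm_neq c n1).
rewrite (eq_bigr _ eq_at) sum_nat_const card_cyclic_perms ?(ltnW n1) //.
have -> : #|[pred d' | d' != c]| = #|T|.-1 by rewrite -(cardsC1 c); apply: eq_card => x; rewrite !inE.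
have -> : #|T|.-1 = #|T|.-2.+1 by case: #|T| n1 => [|[|k]].
by rewrite factS => /eqP; rewrite eqn_pmul2l // => /eqP.
Qed.

End CyclicPerm.

Lemma jacket_ofV (T : finType) (t : {perm T}) : jacket_of t^-1%g = jacket_of t.
Proof.
apply/setP => P; apply/imsetP/imsetP => -[c _ ->].
  by exists ((t^-1)%g c); rewrite // permKV setUC.
by exists (t c); rewrite // permK setUC.
Qed.

Lemma sum_ordered_pairs (T : finType) (f : {set T} -> nat) :
  \sum_c \sum_(d | d != c) f [set c; d] = 2 * \sum_(P : {set T} | #|P| == 2) f P.
Proof.
have pairs_at c : \sum_(d | d != c) f [set c; d] = \sum_(P : {set T} | (#|P| == 2) && (c \in P)) f P.
  rewrite -(big_imset _ (h := fun d => [set c; d]) (A := [pred d | d != c])) /=.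
    apply: eq_bigl => P; apply/imsetP/andP => [[d] | [/cards2P [x [y [xy ->]]]]].
      by rewrite inE => dc ->; rewrite cards2 [c == d]eq_sym dc !inE eqxx.
    rewrite !inE => /orP [] /eqP ->; first by exists y; rewrite ?inE // eq_sym.
    by exists x; rewrite ?inE // setUC.
  move=> x y _ _ /= E; have : x \in [set c; y] by rewrite -E !inE eqxx orbT.
  rewrite !inE => /orP [/eqP xc|/eqP //].
  have : y \in [set c; x] by rewrite E !inE eqxx orbT.
  by rewrite !inE xc => /orP [] /eqP.
rewrite (eq_bigr _ (fun c _ => pairs_at c)).
rewrite (exchange_big_dep (fun P : {set T} => #|P| == 2)) /=; last by move=> c P _ /andP [].
rewrite big_distrr /=; apply: eq_bigr => P /eqP P2.
rewrite (eq_bigl (mem P)); last by move=> c; rewrite P2 eqxx.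
by rewrite sum_nat_const P2 mulnC.
Qed.

Section Jackets.
Variable T : finType.
Hypothesis hT : 2 < #|T|.
Implicit Types (t : {perm T}) (c : T).

Lemma cyclic_perm_pair_inj t : cyclic_perm t -> injective (fun c => [set c; t c]).
Proof.
move=> H c d /= E.
have : c \in [set d; t d] by rewrite -E !inE eqxx.
rewrite !inE => /orP [/eqP //|/eqP cE].
have : d \in [set c; t c] by rewrite E !inE eqxx.
rewrite !inE => /orP [/eqP -> //|/eqP dE].
by move: (cyclic_perm_neq2 d hT H); rewrite -cE -dE eqxx.
Qed.

(* If at every point [t'] steps like [t] or like [t^-1], then agreeing with [t]
   at one point forces agreement along the whole [t]-orbit: a backward step
   would give [t'] or [t] a 2-cycle. *)
Lemma cyclic_perm_eq_at t t' a : cyclic_perm t -> cyclic_perm t' ->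
  (forall c, t' c = t c \/ t' c = (t^-1)%g c) -> t' a = t a -> t' = t.
Proof.
move=> H H' step ta.
have iterE k : t' (iter k t a) = iter k.+1 t a /\ t' (iter k.+1 t a) = iter k.+2 t a.
  elim: k => [|k [IH1 IH2]]; split => //=.
    case: (step (t a)) => // E.
    by move: (cyclic_perm_neq2 a hT H'); rewrite ta E permK eqxx.
  case: (step (iter k.+2 t a)) => // E.
  have E2 : iter k.+2 t a = t (iter k.+1 t a) by [].
  move: E; rewrite {2}E2 permK -IH1 => /perm_inj E.
  by move: (cyclic_perm_neq2 (iter k t a) hT H); rewrite -[t (t _)]/(iter k.+2 t a) E eqxx.
by apply/permP => x; have /porbitP [i ->] := cyclic_permP _ H a x; rewrite permX (iterE i).1.
Qed.

Lemma jacket_of_inj t t' : cyclic_perm t -> cyclic_perm t' ->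
  jacket_of t' = jacket_of t -> t' = t \/ t' = (t^-1)%g.
Proof.
move=> H H' E.
have step c : t' c = t c \/ t' c = (t^-1)%g c.
  have : [set c; t' c] \in jacket_of t by rewrite -E; apply: imset_f.
  case/imsetP => d _ Ed.
  have t'c_neq : t' c != c by apply: cyclic_perm_neq (ltnW hT) H'.
  have : c \in [set d; t d] by rewrite -Ed !inE eqxx.
  have : t' c \in [set d; t d] by rewrite -Ed !inE eqxx orbT.
  rewrite !inE => /orP [] /eqP t'cE /orP [] /eqP cE.
  - by move: t'c_neq; rewrite t'cE cE eqxx.
  - by right; rewrite t'cE cE permK.
  - by left; rewrite t'cE cE.
  - by move: t'c_neq; rewrite t'cE cE eqxx.
have /card_gt0P [a _] : 0 < #|T| by apply: ltn_trans hT.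
case: (step a) => [ta|t'a]; first by left; apply: cyclic_perm_eq_at ta.
right; apply: (cyclic_perm_eq_at (cyclic_permV H) H') t'a => c.
by rewrite invgK; case: (step c); [right|left].
Qed.

Lemma cyclic_permV_neq t : cyclic_perm t -> (t^-1)%g != t.
Proof.
move=> H; apply/eqP => E.
have /card_gt0P [x _] : 0 < #|T| by apply: ltn_trans hT.
by move: (cyclic_perm_neq2 x hT H); rewrite -{1}E permK eqxx.
Qed.

Lemma sum_cyclic_perms_jacket (g : {set {set T}} -> nat) :
  \sum_(t in cyclic_perms T) g (jacket_of t) = 2 * \sum_(J in jackets T) g J.
Proof.
rewrite (partition_big_imset (@jacket_of T)) big_distrr /=.
apply: eq_bigr => J /imsetP [t0 Ht0 ->].
rewrite (eq_bigr (fun _ => g (jacket_of t0))); last by move=> t /andP [_ /eqP ->].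
rewrite sum_nat_const; congr (_ * _).
have H0 : cyclic_perm t0 by move: Ht0; rewrite inE.
transitivity #|[set t0; (t0^-1)%g]|; last by rewrite cards2 eq_sym cyclic_permV_neq.
apply: eq_card => t; rewrite !inE; apply/andP/orP => [[Ht /eqP E] | [] /eqP ->].
- by rewrite inE in Ht; case: (jacket_of_inj H0 Ht E) => ->; [left|right].
- by rewrite eqxx inE.
- by rewrite jacket_ofV eqxx inE cyclic_permV.
Qed.

Lemma card_jackets : 2 * #|jackets T| = #|T|.-1`!.
Proof.
have := sum_cyclic_perms_jacket (fun _ => 1); rewrite !sum_nat_const !muln1 => <-.
by rewrite card_cyclic_perms // (ltn_trans _ hT).
Qed.

Lemma sum_jacket_pairs (f : {set T} -> nat) :
  \sum_(J in jackets T) \sum_(P in J) f P = #|T|.-2`! * \sum_(P : {set T} | #|P| == 2) f P.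
Proof.
apply/eqP; rewrite -(eqn_pmul2l (isT : 0 < 2)) -sum_cyclic_perms_jacket mulnCA.
rewrite -sum_ordered_pairs big_distrr /=; apply/eqP.
have jacket_pairs t : t \in cyclic_perms T ->
    \sum_(P in jacket_of t) f P = \sum_c f [set c; t c].
  by rewrite inE => H; rewrite big_imset //= => x y _ _ /(cyclic_perm_pair_inj H).
rewrite (eq_bigr _ jacket_pairs) exchange_big; apply: eq_bigr => c _.
rewrite (partition_big (fun t : {perm T} => t c) (fun d => d != c)) /=; last first.
  by move=> t; rewrite inE => /(cyclic_perm_neq c (ltnW hT)).
rewrite big_distrr /=; apply: eq_bigr => d dc.
rewrite (eq_bigr (fun _ => f [set c; d])); last by move=> t /andP [_ /eqP ->].
rewrite sum_nat_const -(card_cyclic_perms_at (c := c) (d := d)) 1?eq_sym //.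
by congr (_ * _); apply: eq_card => t; rewrite [in RHS]inE.
Qed.

End Jackets.

Definition components (V : finType) (e : rel V) : {set {set V}} :=
  [set [set y | connect e x y] | x : V].

Section Components.
Variables (V : finType) (e : rel V).
Hypothesis sym_e : connect_sym e.

Lemma card_components_mem x : #|[set B in components e | x \in B]| = 1.
Proof.
apply/eqP/cards1P; exists [set y | connect e x y]; apply/setP => B; rewrite !inE.
apply/andP/eqP => [[/imsetP [x0 _ ->]] | ->]; last by rewrite imset_f // inE connect0.
rewrite inE => x0x; apply/setP => y; rewrite !inE.
by apply/idP/idP; apply: connect_trans; rewrite // sym_e.
Qed.

Lemma sum_card_components (U : finType) (u : U -> V) (P : pred U) :
  \sum_(B in components e) #|[pred y | P y & u y \in B]| = #|P|.
Proof.
rewrite (eq_bigr (fun B : {set V} => \sum_(y | P y && (u y \in B)) 1)); last first.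
  by move=> B _; rewrite sum1_card.
rewrite (exchange_big_dep P) /=; last by move=> B y _ /andP [].
rewrite -sum1_card; apply: eq_bigr => y Py.
by rewrite sum1_card -(card_components_mem (u y)); apply: eq_card => B; rewrite !inE Py.
Qed.

End Components.

Lemma connect_sym_edge (Col : finType) p (sg : Col -> {perm 'I_p}) S :
  connect_sym (edge sg S).
Proof. by apply: sym_connect_sym => [[x|x] [y|y]]. Qed.

Section Bubbles.
Variables (D p : nat) (sg : 'I_D.+1 -> {perm 'I_p}).

Let sum_bubbles_card := sum_card_components (connect_sym_edge sg (colors1D D)).

Lemma sum_bubbles_nvert : \sum_(B in bubbles sg) nvert B = p + p.
Proof.
have := sum_bubbles_card id predT; rewrite card_sum card_ord => <-.
by apply: eq_bigr => B _; apply: eq_card => x; rewrite !inE.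
Qed.

Lemma sum_bubbles_nlines : \sum_(B in bubbles sg) nlines 'I_D B = p * D.
Proof.
have := sum_bubbles_card (fun wc : 'I_p * 'I_D => inl wc.1) predT.
rewrite card_prod !card_ord => <-.
by apply: eq_bigr => B _; apply: eq_card => x; rewrite !inE.
Qed.

Lemma edge_bubble_colors (Q : {set 'I_D}) :
  edge (bubble_colors sg) Q =2 edge sg (lift ord0 @: Q).
Proof.
move=> [x|x] [y|y] //=; apply/existsP/existsP
  => [[c /andP [Qc e]] | [_ /andP [/imsetP [c Qc ->] e]]].
- by exists (lift ord0 c); rewrite imset_f.
- by exists c; rewrite Qc.
- by exists (lift ord0 c); rewrite imset_f.
- by exists c; rewrite Qc.
Qed.

Lemma sum_bubbles_nfaces (Q : {set 'I_D}) :
  \sum_(B in bubbles sg) nfaces (bubble_colors sg) Q B = nfaces sg (lift ord0 @: Q) [set: vtx p].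
Proof.
rewrite /nfaces /n_comp_mem.
transitivity #|roots (edge sg (lift ord0 @: Q))|; last by apply: eq_card => x; rewrite !inE andbT.
rewrite -(sum_bubbles_card id); apply: eq_bigr => B _.
by apply: eq_card => x; rewrite !inE /= (eq_roots (edge_bubble_colors Q)).
Qed.

Lemma nvertT : nvert [set: vtx p] = p + p.
Proof. by rewrite /nvert cardsT card_sum card_ord. Qed.

Lemma nlinesT : nlines 'I_D.+1 [set: vtx p] = p * D.+1.
Proof.
rewrite /nlines -[in RHS](card_ord p) -[in RHS](card_ord D.+1) -card_prod -cardsT.
by apply: eq_card => x; rewrite !inE.
Qed.

End Bubbles.

Lemma sum_pairs_lift0 (D : nat) (F : {set 'I_D.+1} -> nat) :
  \sum_(P : {set 'I_D.+1} | #|P| == 2) F P =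
  \sum_(i < D) F [set ord0; lift ord0 i] + \sum_(Q : {set 'I_D} | #|Q| == 2) F (lift ord0 @: Q).
Proof.
have lift_neq0 (i : 'I_D) : (lift ord0 i == ord0) = false by rewrite eq_sym (negbTE (neq_lift _ _)).
rewrite (bigID (fun P : {set 'I_D.+1} => ord0 \in P)) /=; congr (_ + _).
  rewrite -[RHS](big_imset _ (h := fun i => [set ord0; lift ord0 i])) /=; last first.
    move=> i j _ _ /= E; have : lift ord0 i \in [set ord0; lift ord0 j] by rewrite -E !inE eqxx orbT.
    by rewrite !inE lift_neq0 => /eqP /lift_inj.
  apply: eq_bigl => P; apply/andP/imsetP => [[/cards2P [x [y [xy ->]]]] | [i _ ->]].
    rewrite !inE => /orP [] /eqP x0.
      case: (unliftP ord0 y) => [i ->|y0]; first by exists i; rewrite -?x0.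
      by move: xy; rewrite -x0 y0 eqxx.
    case: (unliftP ord0 x) => [i ->|x0']; first by exists i; rewrite -?x0 // setUC.
    by move: xy; rewrite -x0 x0' eqxx.
  by rewrite cards2 [ord0 == _]eq_sym lift_neq0 !inE eqxx.
rewrite -[RHS](big_imset _ (h := fun Q : {set 'I_D} => lift ord0 @: Q)) /=; last first.
  by move=> Q1 Q2 _ _; apply/imset_inj/lift_inj.
apply: eq_bigl => P; apply/andP/imsetP => [[P2 P0] | [Q]]; last first.
  rewrite unfold_in => Q2 ->; rewrite (card_imset _ (@lift_inj _ ord0)); split=> //.
  by apply/imsetP => -[j _ /eqP]; rewrite eq_sym lift_neq0.
have liftE : lift ord0 @: [set j | lift ord0 j \in P] = P.
  apply/setP => x; apply/imsetP/idP => [[j] | xP]; first by rewrite inE => ? ->.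
  by case: (unliftP ord0 x) xP => [j -> | -> /idPn //]; exists j; rewrite ?inE.
by exists [set j | lift ord0 j \in P]; rewrite // unfold_in -(card_imset _ (@lift_inj _ ord0)) liftE.
Qed.

Local Open Scope ring_scope.

Lemma degree_euler (Col : finType) p (sg : Col -> {perm 'I_p}) (C : {set vtx p}) :
  (2 < #|Col|)%N ->
  degree sg C = (#|Col|.-1`!)%:R / 4 * (2 - (nvert C)%:R + (nlines Col C)%:R)
     - (#|Col|.-2`!)%:R / 2 * (\sum_(P : {set Col} | #|P| == 2) nfaces sg P C)%:R.
Proof.
move=> hCol; rewrite /degree /jacket_genus -mulr_suml sumrB sumr_const -natr_sum.
rewrite sum_jacket_pairs // -(mulr_natr _ #|jackets Col|).
have -> : (#|jackets Col|)%:R = (#|Col|.-1`!)%:R / 2 :> rat by rewrite -card_jackets // natrM; field.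
by rewrite natrM; field.
Qed.

Section Degrees.
Variables (D p : nat) (sg : 'I_D.+1 -> {perm 'I_p}).

Let faces0 := (\sum_(i < D) nfaces sg [set ord0; lift ord0 i] [set: vtx p])%N.
Let faces1D := (\sum_(Q : {set 'I_D} | #|Q| == 2) nfaces sg (lift ord0 @: Q) [set: vtx p])%N.

Lemma sum_bubbles_degree : (2 < D)%N ->
  \sum_(B in bubbles sg) degree (bubble_colors sg) B =
  (D.-1`!)%:R / 4 * (2 * (#|bubbles sg|)%:R - (p + p)%:R + (p * D)%:R)
  - (D.-2`!)%:R / 2 * faces1D%:R.
Proof.
move=> hD; rewrite (eq_bigr (fun B => (D.-1`!)%:R / 4 * (2 - (nvert B)%:R + (nlines 'I_D B)%:R)
  - (D.-2`!)%:R / 2 * (\sum_(Q : {set 'I_D} | #|Q| == 2) nfaces (bubble_colors sg) Q B)%:R)); last first.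
  by move=> B _; rewrite degree_euler card_ord.
rewrite sumrB -!mulr_sumr big_split /= sumrB sumr_const -!natr_sum.
rewrite sum_bubbles_nvert sum_bubbles_nlines exchange_big mulr_natr.
by under eq_bigr => Q _ do rewrite sum_bubbles_nfaces.
Qed.

Lemma degree_graph : (1 < D)%N ->
  degree sg [set: vtx p] =
  (D`!)%:R / 4 * (2 - (p + p)%:R + (p * D.+1)%:R) - (D.-1`!)%:R / 2 * (faces0 + faces1D)%:R.
Proof. by move=> hD; rewrite degree_euler card_ord // nvertT nlinesT sum_pairs_lift0. Qed.

End Degrees.

Unset Implicit Arguments.

Theorem mainTheorem3 (D p : nat) (hD : (3 <= D)%N) (hp : (0 < p)%N)
    (sg : 'I_D.+1 -> {perm 'I_p}) (hconn : connected_graph sg) :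
  (D%:R - 1) * (#|bubbles sg|)%:R
  - 2 / ((D - 2)`!)%:R * (\sum_(B in bubbles sg) degree (bubble_colors sg) B)
  - (D%:R - 1) * p%:R
  + (\sum_(i < D) nfaces sg [set ord0; lift ord0 i] [set: vtx p])%:R
  = D%:R - 2 / ((D - 1)`!)%:R * degree sg [set: vtx p] :> rat.
Proof.
rewrite sum_bubbles_degree // degree_graph ?(ltnW hD) //.
have [k Dk] : exists k, D = k.+3 by exists (D - 3)%N; rewrite -addn3 subnK.
subst D; rewrite !subSS subn0 /= !factS !natrM !natrD.
have k_ge0 : 0 <= k%:R :> rat by exact: ler0n.
have kfact_neq0 : (k`!)%:R != 0 :> rat by rewrite pnatr_eq0 -lt0n fact_gt0.
field; rewrite kfact_neq0 /= !lt0r_neq0 //; lra.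
Qed.
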